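(* Let $K$ be a connected CW complex, $f:K\to K$ a pointed cellular map with $f\circ f\simeq f$, and $H:K\times I\to K$ a (not necessarily pointed) homotopy from $f$ to $f^2$. Let $d:K\to\mathrm{Tel}(f)$ and $u:\mathrm{Tel}(f)\to K$ be the maps described in the context. Then $g=d\circ u:\mathrm{Tel}(f)\to\mathrm{Tel}(f)$ satisfies $g\circ g\simeq g$, and if $g$ splits then $f$ splits.
   Context: $\mathrm{Tel}(f)$ is the union over $n\in\mathbb{Z}$ of the unreduced mapping cylinders $M_n$ of $f:K_n\to K_{n+1}$, each $K_n$ a copy of $K$, glued along the $K_{n+1}$. The map $d:K\to\mathrm{Tel}(f)$ is $f$ regarded as a map into the copy $K_0$; $u:\mathrm{Tel}(f)\to K$ equals $f$ on each copy $K_n$ and equals $H(x,t)$ at the point $(x,t)$ of $M_n$. A map $h:X\to X$ splits if there are a space $L$ and maps $d':X\to L$, $u':L\to X$ with $d'\circ u'\simeq\mathrm{id}_L$ and $u'\circ d'\simeq h$. Homotopies are free. *)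

From HB Require Import structures.
From mathcomp Require Import all_boot all_order all_algebra all_classical all_reals topology generic_quotient.
From mathcomp Require Import Rstruct Rstruct_topology.
From Stdlib Require Relation_Operators.

Set Implicit Arguments.
Unset Strict Implicit.
Unset Printing Implicit Defensive.
Import Order.TTheory GRing.Theory Num.Theory.
Local Open Scope classical_set_scope.
Local Open Scope ring_scope.
Local Open Scope quotient_scope.

Notation R := Rdefinitions.R.

Definition I01 : topologicalType := (`[0, 1]%classic : set R).

Lemma I0_mem : (0 : R) \in (`[0, 1]%classic : set R).
Proof. by apply/mem_set; rewrite /= in_itv /= lexx ler01. Qed.
Lemma I1_mem : (1 : R) \in (`[0, 1]%classic : set R).
Proof. by apply/mem_set; rewrite /= in_itv /= lexx ler01. Qed.

Definition I0 : I01 := exist _ 0 I0_mem.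
Definition I1 : I01 := exist _ 1 I1_mem.

Definition homotopic {X Y : topologicalType} (f g : X -> Y) : Prop :=
  exists H : (X * I01)%type -> Y,
    continuous H /\ (forall x, H (x, I0) = f x) /\ (forall x, H (x, I1) = g x).

Definition splits {X : topologicalType} (h : X -> X) : Prop :=
  exists (L : topologicalType) (d' : X -> L) (u' : L -> X),
    continuous d' /\ continuous u' /\
    homotopic (d' \o u') idfun /\ homotopic (u' \o d') h.

Definition sqnorm n (x : 'rV[R]_n) : R := \sum_(i < n) x ord0 i ^+ 2.

Definition disk (n : nat) : topologicalType :=
  ([set x : 'rV[R]_n | sqnorm x <= 1] : set 'rV[R]_n).
Definition disk_int n : set (disk n) := [set p | sqnorm (val p) < 1].
Definition disk_bd n : set (disk n) := [set p | sqnorm (val p) = 1].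
Arguments disk_int n _ : clear implicits.
Arguments disk_bd n _ : clear implicits.

(* A CW structure on a space K (Whitehead / Hatcher appendix):
   characteristic maps Phi_a : D^n -> K for the n-cells a, such that
   - K is Hausdorff;
   - each Phi_a is continuous and restricts to a homeomorphism from the
     open disk onto its image, the open cell e_a;
   - K is the disjoint union of the open cells;
   - (closure finiteness) Phi_a maps the boundary sphere into the union
     of finitely many cells of dimension < n;
   - (weak topology) A is closed iff every Phi_a^-1(A) is closed. *)
Record CWstructure (K : topologicalType) := {
  cell : nat -> Type;
  charmap : forall n, cell n -> disk n -> K;
  cw_hausdorff : hausdorff_space K;
  charmap_cont : forall n (a : cell n), continuous (charmap a);
  charmap_inj : forall n (a : cell n),
      {in disk_int n &, injective (charmap a)};
  charmap_open : forall n (a : cell n) (U : set (disk n)), open U ->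
      exists V : set K, open V /\
        charmap a @` (U `&` disk_int n) = V `&` (charmap a @` disk_int n);
  cells_cover : forall x : K, exists n (a : cell n),
      (charmap a @` disk_int n) x;
  cells_disjoint : forall n m (a : cell n) (b : cell m) (x : K),
      (charmap a @` disk_int n) x -> (charmap b @` disk_int m) x ->
      existT cell n a = existT cell m b;
  closure_finite : forall n (a : cell n), exists s : seq {m : nat & cell m},
      (forall c, List.In c s -> (projT1 c < n)%N) /\
      forall y, disk_bd n y -> exists c, List.In c s /\
        (charmap (projT2 c) @` disk_int (projT1 c)) (charmap a y);
  weak_topology : forall A : set K,
      closed A <-> forall n (a : cell n), closed (charmap a @^-1` A)
}.

Definition open_cell K (C : CWstructure K) n (a : cell C n) : set K :=
  charmap a @` disk_int n.

Definition skeleton K (C : CWstructure K) (n : nat) : set K :=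
  [set x | exists m (a : cell C m), (m <= n)%N /\ open_cell a x].

Definition cellular K (C : CWstructure K) (f : K -> K) : Prop :=
  forall n, f @` skeleton C n `<=` skeleton C n.

(* The copy K_n
   is the image of K_n x {0}; the cylinder M_n is the image of
   K_n x I together with K_(n+1). *)
Section Telescope.
Context {K : topologicalType} (f : K -> K).

Definition tel_pre : topologicalType := {n : int & (K * I01)%type}.

Definition tel_step (a b : tel_pre) : Prop :=
  exists (n : int) (x : K),
    a = existT _ n (x, I1) /\ b = existT _ (n + 1)%R (f x, I0).

Definition tel_relP : tel_pre -> tel_pre -> Prop :=
  Relation_Operators.clos_refl_sym_trans _ tel_step.
Definition tel_relb (a b : tel_pre) : bool := `[< tel_relP a b >].

Lemma tel_relb_refl : reflexive tel_relb.
Proof. by move=> a; apply/asboolP; apply: Relation_Operators.rst_refl. Qed.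
Lemma tel_relb_sym : symmetric tel_relb.
Proof.
move=> a b; apply/idP/idP => /asboolP h; apply/asboolP; exact: Relation_Operators.rst_sym.
Qed.
Lemma tel_relb_trans : transitive tel_relb.
Proof.
move=> b a c /asboolP h1 /asboolP h2; apply/asboolP; exact: Relation_Operators.rst_trans h1 h2.
Qed.

Definition tel_rel := EquivRel _ tel_relb_refl tel_relb_sym tel_relb_trans.

Definition Tel : topologicalType :=
  quotient_topology {eq_quot tel_rel}.

Definition tel_pi : tel_pre -> Tel := \pi_({eq_quot tel_rel}).

Definition tel_d (x : K) : Tel := tel_pi (existT _ 0%R (f x, I0)).

(* u : Tel(f) -> K is H(x,t) at the point (x,t) of M_n (and f on each
   copy K_n, which is consistent since H(x,0) = f x, H(x,1) = f(f x)). *)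
Definition tel_u (H : (K * I01)%type -> K) (q : Tel) : K :=
  H (projT2 (repr (q : {eq_quot tel_rel}))).
End Telescope.

(** The argument is formal.  Write [d = i \o f], where [i] includes [K] as
    the copy [K_0]; then [u \o i = f], so [u \o d = f \o f].  Hence
    [g \o g = i \o f^3 \o u], which is homotopic to [i \o f \o u = g]
    because [f] is idempotent up to homotopy.  If [g = d \o u] splits as
    [U \o D] with [D \o U ~ id], then [f] splits through the same space via
    [D \o d] and [u \o U]: indeed [(D \o d) \o (u \o U) = D \o g \o U]
    is homotopic to [(D \o U) \o (D \o U) ~ id], and
    [(u \o U) \o (D \o d) ~ u \o g \o d = f^4 ~ f]. *)
From mathcomp Require Import all_boot all_order all_algebra all_classical.
From mathcomp Require Import unstable topology normedtype generic_quotient lra.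
From mathcomp Require Import Rstruct_topology.
Set Implicit Arguments.
Unset Strict Implicit.
Unset Printing Implicit Defensive.
Import Order.TTheory GRing.Theory Num.Theory.
Local Open Scope classical_set_scope.
Local Open Scope ring_scope.
Local Open Scope quotient_scope.

Lemma continuousT_comp {X Y Z : topologicalType} (f : X -> Y) (g : Y -> Z) :
  continuous f -> continuous g -> continuous (g \o f).
Proof. by move=> cf cg x; exact: continuous_comp (cf x) (cg _). Qed.

Lemma continuous_pair {X Y Z : topologicalType} (a : X -> Y) (b : X -> Z) :
  continuous a -> continuous b -> continuous (fun x => (a x, b x)).
Proof. by move=> ca cb x; apply: cvg_pair; [exact: ca | exact: cb]. Qed.

Lemma continuous_prod_map {W X Y Z : topologicalType} (k : W -> Y) (l : X -> Z) :
  continuous k -> continuous l -> continuous (fun p : W * X => (k p.1, l p.2)).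
Proof.
move=> ck cl; apply: continuous_pair.
- by move=> p; apply: continuous_comp; [exact: cvg_fst | exact: ck].
- by move=> p; apply: continuous_comp; [exact: cvg_snd | exact: cl].
Qed.

Lemma continuous_if_le {T U : topologicalType} (s : T -> R) (c : R) (f g : T -> U) :
  continuous s -> continuous f -> continuous g ->
  (forall x, s x = c -> f x = g x) ->
  continuous (fun x => if s x <= c then f x else g x).
Proof.
move=> cs cf cg fg; apply/continuous_subspace_setT.
have -> : [set: T] = s @^-1` [set r | r <= c] `|` s @^-1` [set r | c <= r].
  by apply/seteqP; split=> x //= _; case: (lerP (s x) c) => h; [left|right; exact: ltW].
apply: withinU_continuous.
- by move/continuous_closedP: cs; apply; exact: closed_le.
- by move/continuous_closedP: cs; apply; exact: closed_ge.
- apply: (@subspace_eq_continuous _ _ _ f); last exact: continuous_subspaceT.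
  by move=> x /set_mem; rewrite /from_subspace /= => ->.
- apply: (@subspace_eq_continuous _ _ _ g); last exact: continuous_subspaceT.
  move=> x /set_mem; rewrite /from_subspace /= => cs_x; case: ifPn => // sx_c.
  by apply/esym/fg/eqP; rewrite eq_le sx_c cs_x.
Qed.

Lemma I01_inj (s t : I01) : val s = val t -> s = t.
Proof. by move=> h; apply: eq_sig_hprop => // ?; exact: Prop_irrelevance. Qed.

Lemma clamp01_mem (r : R) :
  Num.max 0 (Num.min r 1) \in (`[0, 1]%classic : set R).
Proof. by apply/mem_set; rewrite /= in_itv /= le_max lexx ge_max ler01 ge_min lexx orbT. Qed.

(* Clamping to [0, 1] turns affine reparametrizations of the unit interval
   into continuous maps into [I01]. *)
Definition clampI (r : R) : I01 := exist _ (Num.max 0 (Num.min r 1)) (clamp01_mem r).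

Lemma val_clampI (r : R) : 0 <= r <= 1 -> val (clampI r) = r.
Proof. by case/andP=> r0 r1; rewrite /= (min_l r1) (max_r r0). Qed.

Lemma continuous_clampI : continuous clampI.
Proof.
apply: continuous_comp_initial.
have -> : set_val \o clampI = cst 0 \max (id \min cst 1) by [].
move=> r; apply: continuous_max; first exact: cst_continuous.
by apply: continuous_min; [exact: cvg_id | exact: cst_continuous].
Qed.

Lemma continuous_val01 : continuous (fun t : I01 => val t).
Proof. exact: initial_continuous. Qed.

Lemma continuous_affine01 (a b : R) : continuous (fun t : I01 => clampI (a * val t + b)).
Proof.
move=> t; apply: continuous_comp; last exact: continuous_clampI.
apply: (@continuous_comp _ _ _ (fun t : I01 => val t) (fun r : R => a * r + b)).
  exact: continuous_val01.
apply: (@continuousD _ R^o); last exact: cst_continuous.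
by apply: (@continuousM _ R^o); [exact: cst_continuous | exact: cvg_id].
Qed.

Lemma clampI_id (r : R) (t : I01) : r = val t -> clampI r = t.
Proof.
move=> ->; apply: I01_inj; rewrite val_clampI //.
by case: t => s /= /set_mem; rewrite /= in_itv.
Qed.

Section Homotopy.
Context {X Y : topologicalType}.
Implicit Types A B C : X -> Y.

Lemma continuous_homotopy_reparam (G : X * I01 -> Y) (phi : I01 -> I01) :
  continuous G -> continuous phi -> continuous (fun p => G (p.1, phi p.2)).
Proof.
move=> cG cphi p; apply: continuous_comp (cG _).
exact: (continuous_prod_map (fun x => @cvg_id _ (nbhs x)) cphi).
Qed.

Lemma homotopic_sym A B : homotopic A B -> homotopic B A.
Proof.
move=> [G [cG [G0 G1]]].
exists (fun p => G (p.1, clampI (-1 * val p.2 + 1))); split.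
  exact: (continuous_homotopy_reparam cG (@continuous_affine01 (-1) 1)).
split=> x /=.
  by rewrite (@clampI_id _ I1) ?G1 //=; lra.
by rewrite (@clampI_id _ I0) ?G0 //=; lra.
Qed.

Lemma homotopic_trans A B C : homotopic A B -> homotopic B C -> homotopic A C.
Proof.
move=> [G [cG [G0 G1]]] [G' [cG' [G'0 G'1]]].
pose first_half (p : X * I01) := G (p.1, clampI (2 * val p.2 + 0)).
pose second_half (p : X * I01) := G' (p.1, clampI (2 * val p.2 + -1)).
exists (fun p => if val p.2 <= 2^-1 then first_half p else second_half p); split.
  apply: (@continuous_if_le _ _ (fun p : X * I01 => val p.2) 2^-1 first_half second_half).
  - by move=> p; apply: continuous_comp; [exact: cvg_snd | exact: continuous_val01].
  - exact: (continuous_homotopy_reparam cG (@continuous_affine01 2 0)).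
  - exact: (continuous_homotopy_reparam cG' (@continuous_affine01 2 (-1))).
  move=> p half.
  by rewrite /first_half /second_half half (@clampI_id _ I1) ?(@clampI_id _ I0) ?G1 ?G'0 //=; lra.
split=> x /=.
  by rewrite ifT /first_half ?(@clampI_id _ I0) ?G0 //=; lra.
by rewrite ifF /second_half ?(@clampI_id _ I1) ?G'1 //=; lra.
Qed.

Lemma homotopic_comp_l {Z : topologicalType} (k : Y -> Z) A B :
  continuous k -> homotopic A B -> homotopic (k \o A) (k \o B).
Proof.
move=> ck [G [cG [G0 G1]]]; exists (k \o G); split; first exact: continuousT_comp.
by split=> x /=; rewrite ?G0 ?G1.
Qed.

Lemma homotopic_comp_r {W : topologicalType} (k : W -> X) A B :
  continuous k -> homotopic A B -> homotopic (A \o k) (B \o k).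
Proof.
move=> ck [G [cG [G0 G1]]]; exists (fun p => G (k p.1, p.2)); split.
  exact: continuousT_comp (continuous_prod_map ck (fun t => @cvg_id _ (nbhs t))) cG.
by split=> x /=; rewrite ?G0 ?G1.
Qed.

End Homotopy.

Lemma homotopic_iter_idem {X : topologicalType} (f : X -> X) :
  continuous f -> homotopic (f \o f) f -> forall n, homotopic (iter n.+2 f) f.
Proof.
move=> cf ff; elim=> [//|n IH].
exact: homotopic_trans (homotopic_comp_l cf IH) ff.
Qed.

Lemma splits_homotopic {X : topologicalType} (h h' : X -> X) :
  splits h -> homotopic h h' -> splits h'.
Proof.
move=> [L [D [U [cD [cU [DU UD]]]]]] hh'.
by exists L, D, U; do 3!split => //; exact: homotopic_trans UD hh'.
Qed.

Lemma splits_swap {S T : topologicalType} (d : T -> S) (u : S -> T) :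
  continuous d -> continuous u ->
  splits (d \o u) -> splits ((u \o d) \o (u \o d)).
Proof.
move=> cd cu [L [D [U [cD [cU [DU UD]]]]]].
have cDU : continuous (D \o U) by exact: continuousT_comp.
exists L, (D \o d), (u \o U); split; first exact: continuousT_comp.
split; first exact: continuousT_comp.
split.
  have DgU_DUDU : homotopic (D \o (d \o u) \o U) ((D \o U) \o (D \o U)).
    exact: homotopic_comp_r cU (homotopic_comp_l cD (homotopic_sym UD)).
  exact: homotopic_trans DgU_DUDU (homotopic_trans (homotopic_comp_l cDU DU) DU).
exact: homotopic_comp_r cd (homotopic_comp_l cu UD).
Qed.

Section Telescope.
Context {K : topologicalType} (f : K -> K) (H : K * I01 -> K).
Hypotheses (H0 : forall x, H (x, I0) = f x) (H1 : forall x, H (x, I1) = f (f x)).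

Definition tel_in0 (x : K) : Tel f := tel_pi f (existT _ 0%R (x, I0)).

Lemma continuous_tel_in0 : continuous tel_in0.
Proof.
apply: (@continuousT_comp _ _ _
  (fun x => existT (fun=> (K * I01)%type) 0%R (x, I0)) (tel_pi f)); last exact: pi_continuous.
apply: (@continuousT_comp _ _ _ (fun x => (x, I0)) (existT _ 0%R)); last exact: existT_continuous.
by apply: (@continuous_pair _ _ _ idfun (cst I0)) => x; [exact: cvg_id | exact: cst_continuous].
Qed.

Lemma tel_relP_H_eq a b : tel_relP f a b -> H (projT2 a) = H (projT2 b).
Proof.
elim=> //= [_ _ [n [x [-> ->]]] | a' b' c' _ -> _ ->] //=.
by rewrite H1 H0.
Qed.

Lemma tel_u_pi a : tel_u H (tel_pi f a) = H (projT2 a).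
Proof.
apply: tel_relP_H_eq.
have : tel_pi f (repr (tel_pi f a : {eq_quot tel_rel f})) = tel_pi f a.
  by rewrite /tel_pi reprK.
by move/eqmodP => /asboolP.
Qed.

Lemma tel_u_in0 x : tel_u H (tel_in0 x) = f x.
Proof. by rewrite /tel_in0 tel_u_pi H0. Qed.

Lemma continuous_tel_u : continuous H -> continuous (tel_u H : Tel f -> K).
Proof.
move=> cH; apply/quotient_continuous.
have -> : tel_u H \o \pi_({eq_quot tel_rel f}) = H \o sigT_fun (fun _ => id).
  by apply: funext => a; exact: tel_u_pi.
apply: continuousT_comp cH.
by apply: sigT_continuous => i x; exact: cvg_id.
Qed.

End Telescope.

Theorem lemma2p5 (K : topologicalType) (C : CWstructure K) (x0 : K)
  (f : K -> K) (H : (K * I01)%type -> K) :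
  connected [set: K] ->
  skeleton C 0 x0 ->
  continuous f -> f x0 = x0 -> cellular C f ->
  homotopic (f \o f) f ->
  continuous H -> (forall x, H (x, I0) = f x) -> (forall x, H (x, I1) = f (f x)) ->
  let g := tel_d f \o tel_u H in
  homotopic (g \o g) g /\ (splits g -> splits f).
Proof.
move=> _ _ cf _ _ ff cH H0 H1 g.
have cu : continuous (tel_u H : Tel f -> K) := continuous_tel_u H0 H1 cH.
have ci : continuous (tel_in0 f) by exact: continuous_tel_in0.
have cd : continuous (tel_d f) := continuousT_comp cf ci.
have ud : tel_u H \o tel_d f = f \o f.
  by apply: funext => x; exact: (tel_u_in0 H0 H1 (f x)).
have dud : homotopic (tel_d f \o (tel_u H \o tel_d f)) (tel_d f).
  by rewrite ud; exact: homotopic_comp_l ci (homotopic_iter_idem cf ff 1).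
split; first exact: homotopic_comp_r cu dud.
move=> /(splits_swap cd cu); rewrite ud => /splits_homotopic; apply.
exact: homotopic_iter_idem cf ff 2.
Qed.
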